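(* Let $p$ be an odd prime, $S$ a finite $p$-group and $\mathcal{F}$ a saturated fusion system on $S$. Let $E_1$ and $E_2$ be distinct $\mathcal{F}$-essential subgroups of $S$ with $N_S(E_1)=N_S(E_2)$, and set $T=\mathrm{core}_{\mathcal{F}}(E_1,E_2)$. Suppose that: (1) $E_1$, $E_2$ and $T$ have rank at most $3$; (2) $O^{p'}(\mathrm{Out}_{\mathcal{F}}(E_1))\cong\mathrm{SL}_2(p)$ and it centralizes $T$; (3) there exists a subgroup $V$ with $T\le V\le E_1$ that is $\mathcal{F}$-characteristic in $E_1$, has sectional rank at most $3$, is contained in $C_{E_1}(T)T$, and is such that $V/T$ is a natural $\mathrm{SL}_2(p)$-module for $O^{p'}(\mathrm{Out}_{\mathcal{F}}(E_1))$. Then $T$ is abelian, $T\le Z(V)$, $|[V,V]|\le p$, and $T/[V,V]$ is cyclic.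
   Context: Rank: minimal size of a generating set; sectional rank at most $k$ means all subgroups have rank at most $k$. For $P\le S$, $\mathrm{Aut}_{\mathcal{F}}(P)=\mathrm{Hom}_{\mathcal{F}}(P,P)$, $\mathrm{Out}_{\mathcal{F}}(P)=\mathrm{Aut}_{\mathcal{F}}(P)/\mathrm{Inn}(P)$, $P^{\mathcal{F}}=\{P\alpha:\alpha\in\mathrm{Hom}_{\mathcal{F}}(P,S)\}$. $E\le S$ is $\mathcal{F}$-essential if $C_S(P)\le P$ and $|N_S(E)|\ge|N_S(P)|$ for all $P\in E^{\mathcal{F}}$, and $\mathrm{Out}_{\mathcal{F}}(E)$ has a strongly $p$-embedded subgroup. For $Q\le P$, $Q$ is $\mathcal{F}$-characteristic in $P$ if normalized by $\mathrm{Aut}_{\mathcal{F}}(P)$. For $\mathcal{F}$-essential $E_1,E_2$ with $N_S(E_1)=N_S(E_2)$, $\mathrm{core}_{\mathcal{F}}(E_1,E_2)$ is the largest subgroup of $E_1\cap E_2$ normalized by $\mathrm{Aut}_{\mathcal{F}}(E_1)$, $\mathrm{Aut}_{\mathcal{F}}(E_2)$ and $\mathrm{Aut}_{\mathcal{F}}(N_S(E_1))$. $O^{p'}(G)$ is the subgroup generated by the $p$-elements of $G$. A natural $\mathrm{SL}_2(p)$-module is the $2$-dimensional $\mathbb{F}_p$-module of $\mathrm{SL}_2(p)$ acting by matrix multiplication. *)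

From HB Require Import structures.
From mathcomp Require Import all_boot all_order all_algebra all_fingroup all_solvable.
Set Implicit Arguments. Unset Strict Implicit. Unset Printing Implicit Defensive.

Local Open Scope group_scope.

(* A "morphism candidate" is a finite function gT -> gT; the predicate
   F P f means: f restricted to P is an F-morphism P -> S
   (only the values of f on P matter, see axiom [fs_agree]). *)
Definition fusion_pred (gT : finGroupType) := {set gT} -> {ffun gT -> gT} -> bool.

Definition is_fusion_system (gT : finGroupType) (S : {group gT}) (F : fusion_pred gT) : Prop :=
  [/\
      (forall P f, F P f ->
         [/\ group_set P, P \subset S, (forall x y, x \in P -> y \in P -> f (x * y) = f x * f y),
             {in P &, injective f} & f @: P \subset S]),
      (forall (P : {group gT}) s, P \subset S -> s \in S -> F P [ffun x => x ^ s]),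
      (forall P f g, F P f -> F (f @: P) g -> F P [ffun x => g (f x)])
    & (* every morphism is an F-isomorphism onto its image followed by inclusion *)
      (forall P f, F P f -> (exists2 g, F (f @: P) g & {in P, forall x, g (f x) = x})) /\
      (forall P Q f, F P f -> group_set Q -> Q \subset P -> F Q f) /\
      (forall P (f g : {ffun gT -> gT}), F P f -> {in P, f =1 g} -> F P g)].

Definition AutF (gT : finGroupType) (F : fusion_pred gT) (P : {set gT}) : {set {perm gT}} :=
  [set a in Aut P | F P [ffun x => a x]].
Definition AutS (gT : finGroupType) (S P : {group gT}) : {set {perm gT}} :=
  (@conj_aut gT P) @: 'N_S(P).
Definition InnA (gT : finGroupType) (P : {group gT}) : {set {perm gT}} :=
  (@conj_aut gT P) @: P.
Definition OutF (gT : finGroupType) (F : fusion_pred gT) (P : {group gT}) :=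
  AutF F P / InnA P.

Definition in_Fclass (gT : finGroupType) (F : fusion_pred gT) (P Q : {set gT}) : Prop :=
  exists2 f, F P f & Q = f @: P.

Definition fully_normalized (gT : finGroupType) (S : {group gT}) (F : fusion_pred gT) (P : {set gT}) :=
  forall Q, in_Fclass F P Q -> #|'N_S(Q)| <= #|'N_S(P)|.
Definition fully_centralized (gT : finGroupType) (S : {group gT}) (F : fusion_pred gT) (P : {set gT}) :=
  forall Q, in_Fclass F P Q -> #|'C_S(Q)| <= #|'C_S(P)|.

(* N_phi = { g in N_S(P) | phi c_g phi^-1 in Aut_S(phi(P)) } *)
Definition Nphi (gT : finGroupType) (S : {group gT}) (P : {set gT}) (f : {ffun gT -> gT}) : {set gT} :=
  [set g in 'N_S(P) | [exists h in 'N_S(f @: P), [forall y in P, f (y ^ g) == f y ^ h]]].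

Definition saturated_fusion_system (gT : finGroupType) (p : nat) (S : {group gT}) (F : fusion_pred gT) : Prop :=
  [/\ is_fusion_system S F,
      (forall P : {group gT}, P \subset S -> fully_normalized S F P ->
         fully_centralized S F P /\ p.-Sylow(AutF F P) (AutS S P))
    &
      (forall P (f : {ffun gT -> gT}), F P f -> fully_centralized S F (f @: P) ->
         (exists2 f', F (Nphi S P f) f' & {in P, f' =1 f}))].

Definition Opp (T : finGroupType) (p : nat) (G : {set T}) : {set T} :=
  <<[set x in G | p.-elt x]>>.

Definition strongly_p_embedded (T : finGroupType) (p : nat) (H G : {set T}) : Prop :=
  [/\ H \proper G, p %| #|H| & forall x, x \in G :\: H -> ~~ (p %| #|H :&: H :^ x|)].

Definition F_essential (gT : finGroupType) (p : nat) (S : {group gT}) (F : fusion_pred gT) (E : {group gT}) : Prop :=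
  [/\ E \subset S,
      (forall P, in_Fclass F E P -> 'C_S(P) \subset P),
      fully_normalized S F E
    & exists H : {group coset_of (InnA E)}, strongly_p_embedded p H (OutF F E)].

Definition normalized_by (gT : finGroupType) (A : {set {perm gT}}) (Q : {set gT}) : bool :=
  A \subset 'N(Q | 'P).

Definition is_coreF (gT : finGroupType) (S : {group gT}) (F : fusion_pred gT) (E1 E2 T : {group gT}) : Prop :=
  let good (Q : {set gT}) :=
    [&& Q \subset E1 :&: E2, normalized_by (AutF F E1) Q, normalized_by (AutF F E2) Q
      & normalized_by (AutF F 'N_S(E1)) Q] in
  good T /\ forall Q : {group gT}, good Q -> Q \subset T.

Definition rank_le (gT : finGroupType) (G : {set gT}) (k : nat) : Prop :=
  exists2 X : {set gT}, #|X| <= k & <<X>> = G.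
Definition sectional_rank_le (gT : finGroupType) (G : {set gT}) (k : nat) : Prop :=
  forall H : {group gT}, H \subset G -> rank_le H k.

Definition SL2 (p : nat) : {set {'GL_2['F_p]}} :=
  [set g : {'GL_2['F_p]} | (\det (GLval g) == 1)%R].

(* V/T is a natural SL_2(p)-module for the group of automorphisms A
   (acting on V by permutations of gT) modulo I: there is an identification
   theta of V/T with the row space F_p^2 such that the induced action of A
   on V/T has kernel exactly I and image exactly SL_2(p) acting by matrix
   multiplication. *)
Definition natural_SL2_module (gT : finGroupType) (p : nat) (A I : {set {perm gT}})
    (V T : {set gT}) : Prop :=
  exists theta : gT -> 'rV['F_p]_2,
  [/\ (forall x y, x \in V -> y \in V -> theta (x * y) = (theta x + theta y)%R),
      theta @: V = [set: 'rV['F_p]_2],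
      [set x in V | theta x == 0%R] = T,
      (forall a, a \in A -> (exists2 g, g \in SL2 p &
          forall x, x \in V -> theta (a x) = mulmx (theta x) (GLval g))) /\
      (forall g, g \in SL2 p -> (exists2 a, a \in A &
          forall x, x \in V -> theta (a x) = mulmx (theta x) (GLval g)))
    & (forall a, a \in I -> forall x, x \in V -> theta (a x) = theta x) /\
      (forall a, a \in A -> (forall x, x \in V -> theta (a x) = theta x) -> a \in I)].

From HB Require Import structures.
From mathcomp Require Import all_boot all_order all_algebra all_fingroup all_solvable.
Set Implicit Arguments. Unset Strict Implicit. Unset Printing Implicit Defensive.
Import GRing.Theory.
Local Open Scope group_scope.

(* Since V = C_V(T) T, the
   Frattini subgroup Phi(V) = Phi(C_V(T)) Phi(T) lies in Z(T) Phi(T), because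
   commutators and p-th powers of C_V(T) lie in C_V(T) /\ T = Z(T).  As
   |V : Phi(V)| <= p^3 (rank) and |V : T| = p^2, the subgroup Z(T) Phi(T) has
   index at most p in T, so T / Z(T) is cyclic, T is abelian, and T <= Z(V).
   Lifting a basis x, y of V/T gives V = <x, y> T with T central, so
   [V, V] = <[x, y]> and [x, y]^p = [x^p, y] = 1.
   Finally -1 in SL_2(p) lifts to some a in O^p'(Aut_F(E1)), and since
   O^p'(Out_F(E1)) centralizes T, a acts on T as conjugation by some e in E1.
   Modulo M = [V, V] Mho^1(T), the element a(v) v of T gives
   (v^p)^e v^p in M, so e of odd order inverts v^p M, forcing v^p in M.
   Hence Phi(V) <= M has index at most p in T and T / [V, V] is cyclic. *)

Lemma card_gen_abelian_expn_le (gT : finGroupType) (p : nat) (Y : {set gT}) :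
  0 < p -> abelian <<Y>> -> {in Y, forall y, y ^+ p = 1} -> #|<<Y>>| <= p ^ #|Y|.
Proof.
move=> p_gt0; have [n] := ubnP #|Y|; elim: n Y => // n IHn Y leYn cYY expY.
have [-> | [y Yy]] := set_0Vmem Y; first by rewrite gen0 cards0 cards1.
have sY'Y : Y :\ y \subset Y := subsetDl Y [set y].
have cY'y : <<Y :\ y>> \subset 'C(<[y]>).
  by rewrite (subset_trans (genS sY'Y)) // (subset_trans cYY) // centS // cycle_subG mem_gen.
have -> : <<Y>> = <[y]> <*> <<Y :\ y>>.
  by rewrite joing_idl joing_idr /joing setD1K.
rewrite (cent_joinEr cY'y) (cardsD1 y Y) Yy expnS.
apply: (@leq_trans (#[y] * #|<<Y :\ y>>|)).
  by rewrite orderE mul_cardG leq_pmulr // cardG_gt0.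
apply: leq_mul; first by rewrite dvdn_leq // order_dvdn expY.
apply: IHn; first by rewrite -ltnS (leq_trans _ leYn) // (cardsD1 y Y) Yy.
- exact: abelianS (genS sY'Y) cYY.
- by move=> z /(subsetP sY'Y); apply: expY.
Qed.

Lemma pgroup_card_le_cyclic (gT : finGroupType) (p : nat) (G : {group gT}) :
  prime p -> p.-group G -> #|G| <= p -> cyclic G.
Proof.
move=> pr_p pG leGp; apply: (dvdn_prime_cyclic pr_p).
have [[|[|k]] oG] := p_natP pG; rewrite oG ?dvd1n ?expn1 //.
by move: leGp; rewrite oG -[X in _ <= X]expn1 leq_exp2l ?prime_gt1.
Qed.

Section PGroupFacts.
Variable gT : finGroupType.
Implicit Types (p : nat) (G H N T V : {group gT}).

Lemma indexg_Phi_le_rank p G k :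
  prime p -> p.-group G -> rank_le G k -> #|G : 'Phi(G)| <= p ^ k.
Proof.
move=> pr_p pG [X leXk genX].
have nPG : G \subset 'N('Phi(G)) := normal_norm (Phi_normal G).
have sXG : X \subset G by rewrite -genX subset_gen.
have defQ : G / 'Phi(G) = <<coset 'Phi(G) @* X>>.
  by rewrite -morphim_gen ?genX // (subset_trans sXG).
have [abQ expQ] := abelemP pr_p (Phi_quotient_abelem pG).
rewrite -card_quotient // defQ.
apply: leq_trans (card_gen_abelian_expn_le (prime_gt0 pr_p) _ _) _.
- by rewrite -defQ.
- by move=> y Xy; apply: expQ; rewrite /= defQ mem_gen.
rewrite leq_pexp2l ?prime_gt0 // (leq_trans _ leXk) // morphimEsub ?leq_imset_card //.
exact: subset_trans sXG nPG.
Qed.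

Lemma Phi_sub_commg_expg p G N :
  p.-group G -> {in G &, forall u v, [~ u, v] \in N} -> {in G, forall u, u ^+ p \in N} ->
  'Phi(G) \subset N.
Proof.
move=> pG commN expN; rewrite (Phi_joing pG) join_subG (MhoE 1 pG) !gen_subG.
apply/andP; split; apply/subsetP.
  by move=> _ /imset2P[u v Gu Gv ->]; apply: commN.
by move=> _ /imsetP[u Gu ->]; rewrite expn1 expN.
Qed.

Lemma indexg_le_p_of_bounds p n N T V :
  0 < p -> N \subset T -> T \subset V ->
  #|V : N| <= p ^ n.+1 -> p ^ n <= #|V : T| -> #|T : N| <= p.
Proof.
move=> p_gt0 sNT sTV leVN leVT.
rewrite -(@leq_pmul2l (p ^ n)) ?expn_gt0 ?p_gt0 // -expnSr.
apply: leq_trans leVN; rewrite -(Lagrange_index sTV sNT).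
by rewrite leq_mul2r leVT orbT.
Qed.

Lemma odd_order_inverted_trivial (x e : gT) :
  odd #[e] -> odd #[x] -> x ^ e = x^-1 -> x = 1.
Proof.
move=> odd_e odd_x xeV.
have e_e2 : e \in <[e ^+ 2]>.
  have gen_e2 : generator <[e]> (e ^+ 2) by rewrite generator_coprime coprimen2.
  by rewrite -(eqP gen_e2) cycle_id.
have cxe2 : e ^+ 2 \in 'C[x].
  rewrite cent1C; apply/cent1P/commgP/conjg_fixP.
  by rewrite expgS expg1 conjgM xeV conjVg xeV invgK.
have /cent1P/commgP/conjg_fixP xe : x \in 'C[e].
  by rewrite cent1C (subsetP _ e e_e2) ?cycle_subG.
have x2 : x ^+ 2 = 1 by rewrite expgS expg1 -{1}xe xeV mulVg.
have dvd_x2 : #[x] %| 2 by rewrite order_dvdn x2.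
by apply/eqP; rewrite -order_eq1 -(gcdn_idPl dvd_x2) -/(coprime _ _) coprimen2.
Qed.

Lemma quotient_cyclic_of_index_Phi p T H :
  prime p -> p.-group T -> H <| T -> #|T : H <*> 'Phi(T)| <= p -> cyclic (T / H).
Proof.
move=> pr_p pT /andP[sHT nHT] leTp; apply: Phi_quotient_cyclic.
apply: (pgroup_card_le_cyclic pr_p); first by rewrite !quotient_pgroup.
have nPQ := normal_norm (Phi_normal (T / H)).
have defPQ : 'Phi(T / H) = (H <*> 'Phi(T)) / H.
  by rewrite quotientYidl ?(quotient_Phi pT nHT) ?(subset_trans (Phi_sub T)).
rewrite card_quotient //; change (#|T / H : 'Phi(T / H)| <= p); rewrite defPQ.
by rewrite index_quotient_eq ?join_subG ?sHT ?Phi_sub // subIset // joing_subl orbT.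
Qed.

End PGroupFacts.

Lemma morphim_Opp_sub (aT rT : finGroupType) (p : nat) (D : {group aT})
    (f : {morphism D >-> rT}) (A : {set aT}) :
  A \subset D -> f @* Opp p A \subset Opp p (f @* A).
Proof.
move=> sAD; rewrite /Opp morphim_gen ?(subset_trans _ sAD) ?setIdE ?subsetIl //.
apply: genS; apply/subsetP => _ /morphimP[b Db /setIP[Ab pb] ->].
by move: pb; rewrite !inE mem_morphim //=; apply: morph_p_elt.
Qed.

Lemma Opp_subG (gT : finGroupType) p (A : {set gT}) (G : {group gT}) :
  A \subset G -> Opp p A \subset G.
Proof. by move=> sAG; rewrite gen_subG (subset_trans _ sAG) // setIdE subsetIl. Qed.

Section InnerAutomorphisms.
Variable gT : finGroupType.
Implicit Types (G : {group gT}) (a : {perm gT}).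

Lemma conj_autJ G a e :
  a \in Aut G -> e \in G -> conj_aut G e ^ a = conj_aut G (a e).
Proof.
move=> AutGa Ge; have Gae : a e \in G := Aut_closed AutGa Ge.
apply: (eq_Aut (A := G)); rewrite ?groupJ ?Aut_aut // => z Gz.
have Gaz : a^-1 z \in G by rewrite Aut_closed ?groupV.
have := morphJ (autm AutGa) Gaz Ge; rewrite /= !autmE => aJ.
by rewrite conjgE !permM conj_autE // aJ permKV conj_autE.
Qed.

Lemma Aut_norm_Inn G : Aut G \subset 'N(conj_aut G @* G).
Proof.
apply/subsetP => a AutGa; rewrite inE; apply/subsetP => _ /imsetP[_ /morphimP[e _ Ge ->] ->].
by rewrite conj_autJ // mem_morphim ?(subsetP (normG G)) ?Aut_closed.
Qed.

Lemma Opp_acts_as_inner p (A : {set {perm gT}}) (E T : {group gT}) (a : {perm gT}) :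
  A \subset Aut E -> T \subset E -> E \subset 'N(T) ->
  Opp p (A / InnA E) \subset 'C_A(T | 'P) / InnA E -> a \in Opp p A ->
  exists2 e, e \in E & {in T, forall t, a t = t ^ e}.
Proof.
move=> sAAut sTE nTE cOpp Oa.
have defInn : InnA E = conj_aut E @* E by rewrite morphimEsub.
rewrite defInn in cOpp.
have nInnA : A \subset 'N(conj_aut E @* E) := subset_trans sAAut (Aut_norm_Inn E).
have Na : a \in 'N(conj_aut E @* E) := subsetP (Opp_subG p nInnA) a Oa.
have /morphimP[c Nc /setIP[_ /astabP cTc] eq_ac] :=
  subsetP cOpp _ (subsetP (morphim_Opp_sub p _ nInnA) _ (mem_morphim _ Na Oa)).
move/(rcoset_kercosetP Na Nc): eq_ac => /rcosetP[_ /morphimP[e _ Ee ->] ->].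
exists e => // t Tt; rewrite permM conj_autE ?(subsetP sTE t Tt) //.
by rewrite -[RHS]cTc // memJ_norm // (subsetP nTE).
Qed.

End InnerAutomorphisms.

Section FusionSystem.
Variables (gT : finGroupType) (S : {group gT}) (F : fusion_pred gT).
Hypothesis fsF : is_fusion_system S F.

Lemma conj_aut_AutF (P : {group gT}) s :
  P \subset S -> s \in 'N_S(P) -> conj_aut P s \in AutF F P.
Proof.
move=> sPS /setIP[Ss Ns]; have [_ conjF _ [_ [_ agreeF]]] := fsF.
rewrite inE (subsetP (Aut_conj_aut P 'N(P))) ?mem_morphim //=.
apply: agreeF (conjF P s sPS Ss) _ => x Px.
by rewrite !ffunE norm_conj_autE.
Qed.

Lemma AutF_normalized_normal (E Q : {group gT}) :
  E \subset S -> Q \subset E -> normalized_by (AutF F E) Q -> Q <| E.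
Proof.
move=> sES sQE nQA; rewrite /normal sQE; apply/subsetP => e Ee; rewrite inE.
apply/subsetP => _ /imsetP[x Qx ->].
have NSe : e \in 'N_S(E) by rewrite inE (subsetP sES) // (subsetP (normG E)).
have /astabsP/(_ x) := subsetP nQA _ (conj_aut_AutF sES NSe).
by rewrite /= apermE conj_autE ?Qx // (subsetP sQE).
Qed.

End FusionSystem.

Section AdditiveOnGroup.
Variables (gT : finGroupType) (R : zmodType) (V : {group gT}) (theta : gT -> R).
Hypothesis thetaM : {in V &, forall x y, theta (x * y) = (theta x + theta y)%R}.

Lemma theta1 : theta 1 = 0%R.
Proof. by apply: (addrI (theta 1)); rewrite addr0 -thetaM ?mulg1. Qed.

Lemma thetaV x : x \in V -> theta x^-1 = (- theta x)%R.
Proof. by move=> Vx; apply/eqP; rewrite -addr_eq0 -thetaM ?groupV // mulVg theta1. Qed.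

Lemma thetaX x n : x \in V -> theta (x ^+ n) = (theta x *+ n)%R.
Proof.
move=> Vx; elim: n => [|n IHn]; first by rewrite theta1.
by rewrite expgS thetaM ?groupX // IHn mulrS.
Qed.

Lemma thetaR x y : x \in V -> y \in V -> theta [~ x, y] = 0%R.
Proof.
move=> Vx Vy; have Vy' : y^-1 \in V by rewrite groupV.
by rewrite !thetaM ?groupV ?groupM // !thetaV // addrCA addKr addNr.
Qed.

End AdditiveOnGroup.

Section NaturalModule.
Variables (gT : finGroupType) (p : nat) (V T : {group gT}) (theta : gT -> 'rV['F_p]_2).
Hypotheses (pr_p : prime p) (pV : p.-group V).
Hypothesis thetaM : {in V &, forall x y, theta (x * y) = (theta x + theta y)%R}.
Hypothesis theta_onto : theta @: V = [set: 'rV['F_p]_2].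
Hypothesis theta_ker : [set x in V | theta x == 0%R] = T.

Lemma natural_kerE x : (x \in T) = (x \in V) && (theta x == 0%R).
Proof. by rewrite -theta_ker inE. Qed.

Lemma natural_sub : T \subset V.
Proof. by apply/subsetP => x; rewrite natural_kerE => /andP[]. Qed.

Lemma natural_ker x : x \in V -> theta x = 0%R -> x \in T.
Proof. by move=> Vx thx; rewrite natural_kerE Vx thx eqxx. Qed.

Lemma natural_commg x y : x \in V -> y \in V -> [~ x, y] \in T.
Proof. by move=> Vx Vy; rewrite natural_ker ?groupR ?(thetaR thetaM). Qed.

Lemma natural_expg x : x \in V -> x ^+ p \in T.
Proof.
move=> Vx; rewrite natural_ker ?groupX // (thetaX thetaM) //.
by rewrite -scaler_nat pchar_Fp_0 // scale0r.
Qed.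

Lemma natural_der1_sub : [~: V, V] \subset T.
Proof.
by rewrite gen_subG; apply/subsetP => _ /imset2P[x y Vx Vy ->]; apply: natural_commg.
Qed.

Lemma natural_indexg : p ^ 2 <= #|V : T|.
Proof.
have -> : (p ^ 2)%N = #|[set: 'rV['F_p]_2]| by rewrite cardsT card_mx card_Fp.
rewrite -theta_onto; apply: leq_trans (leq_imset_card (fun C => theta (repr C)) (rcosets T V)).
apply: subset_leq_card; apply/subsetP => _ /imsetP[x Vx ->].
apply/imsetP; exists (T :* x); first by apply/rcosetsP; exists x.
have /rcosetP[t Tt ->] := mem_repr x (rcoset_refl T x).
move: Tt; rewrite natural_kerE => /andP[Vt /eqP tht].
by rewrite thetaM // tht add0r.
Qed.

Lemma natural_index_le_p (N : {group gT}) :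
  rank_le V 3 -> 'Phi(V) \subset N -> N \subset T -> #|T : N| <= p.
Proof.
move=> rkV sPN sNT.
apply: (@indexg_le_p_of_bounds _ _ 2 _ _ _ (prime_gt0 pr_p) sNT natural_sub _ natural_indexg).
by apply: leq_trans (indexg_Phi_le_rank pr_p pV rkV); rewrite dvdn_leq ?indexgS.
Qed.

Lemma natural_Phi_cent_sub : 'Phi('C_V(T)) \subset 'Z(T).
Proof.
have sCV : 'C_V(T) \subset V := subsetIl V _.
have inZ z : z \in 'C_V(T) -> z \in T -> z \in 'Z(T).
  by move=> /setIP[_ cTz] Tz; rewrite inE Tz.
apply: Phi_sub_commg_expg (pgroupS sCV pV) _ _ => [u v Cu Cv | u Cu].
  by apply: inZ; [exact: groupR | exact: natural_commg (subsetP sCV u Cu) (subsetP sCV v Cv)].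
by apply: inZ; [exact: groupX | exact: natural_expg (subsetP sCV u Cu)].
Qed.

Lemma natural_cent_mul : V \subset 'C(T) * T -> 'C_V(T) * T = V.
Proof.
by move=> sVCT; rewrite group_modr ?natural_sub // (setIidPl sVCT).
Qed.

Lemma natural_abelian : rank_le V 3 -> V \subset 'C(T) * T -> abelian T.
Proof.
move=> rkV /natural_cent_mul defV; have pT := pgroupS natural_sub pV.
have cpV : 'C_V(T) \* T = V by rewrite cprodE // centsC subsetIr.
have [_ defPhiV _] := cprodP (Phi_cprod pV cpV).
apply: cyclic_center_factor_abelian.
apply: (quotient_cyclic_of_index_Phi pr_p pT (center_normal T)).
apply: natural_index_le_p; rewrite ?join_subG ?center_sub ?Phi_sub //.
by rewrite -defPhiV mul_subG ?joing_subr // (subset_trans natural_Phi_cent_sub) ?joing_subl.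
Qed.

Lemma natural_sub_center : rank_le V 3 -> V \subset 'C(T) * T -> T \subset 'Z(V).
Proof.
move=> rkV sVCT; have abT := natural_abelian rkV sVCT.
by rewrite subsetI natural_sub -(natural_cent_mul sVCT) centM subsetI centsC subsetIr.
Qed.

Lemma natural_basis :
  exists x y, [/\ x \in V, y \in V & (<[x]> <*> <[y]>) * T = V].
Proof.
have onto u : exists2 x, x \in V & theta x = u.
  have /imsetP[x Vx ->] : u \in theta @: V by rewrite theta_onto inE.
  by exists x.
have [x Vx thx] := onto (delta_mx ord0 ord0).
have [y Vy thy] := onto (delta_mx ord0 ord_max).
have sXYV : <[x]> <*> <[y]> \subset V by rewrite join_subG !cycle_subG Vx Vy.
exists x, y; split=> //; apply/eqP; rewrite eqEsubset mul_subG ?natural_sub //=.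
apply/subsetP => v Vv.
pose w := x ^+ (theta v ord0 ord0 : nat) * y ^+ (theta v ord0 ord_max : nat).
have XYw : w \in <[x]> <*> <[y]>.
  by rewrite groupM // groupX // mem_gen // inE cycle_id ?orbT.
have Vw : w \in V := subsetP sXYV w XYw.
have thw : theta w = theta v.
  rewrite thetaM ?groupX // !(thetaX thetaM) // thx thy.
  apply/matrixP => i j; rewrite !mxE !mulmxnE !mxE (ord1 i).
  case: j => [[|[|j]] lt_j2] //=; rewrite ?mul0rn ?addr0 ?add0r natr_Zp;
    by congr (theta v _ _); apply: val_inj.
rewrite -(mulKVg w v) mem_mulg // natural_ker ?groupM ?groupV //.
by rewrite thetaM ?groupV // (thetaV thetaM) // thw addNr.
Qed.

Lemma natural_card_der1 : T \subset 'Z(V) -> #|[~: V, V]| <= p.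
Proof.
move=> sTZ; have cVT : T \subset 'C(V) := subset_trans sTZ (subsetIr V _).
have [x [y [Vx Vy defV]]] := natural_basis.
have sXYV : <[x]> <*> <[y]> \subset V by rewrite join_subG !cycle_subG Vx Vy.
have Txy : [~ x, y] \in T := natural_commg Vx Vy.
have cpV : (<[x]> <*> <[y]>) \* T = V by rewrite cprodE // (subset_trans cVT) ?centS.
have abT : abelian T := subset_trans cVT (centS natural_sub).
have defV' : [~: V, V] = <[ [~ x, y] ]>.
  have := der_cprod 1 cpV; rewrite (derG1P abT) cprodg1 -derg1 => <-.
  by apply: der1_joing_cycles; rewrite (subsetP (centS sXYV)) ?(subsetP cVT).
have cxT : commute x [~ x, y] := commute_sym (centP (subsetP cVT _ Txy) x Vx).
rewrite defV' -orderE dvdn_leq ?prime_gt0 // order_dvdn -commXg //.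
exact/commgP/(centP (subsetP cVT _ (natural_expg Vx)) y Vy).
Qed.

Lemma natural_quotient_der1_cyclic :
  rank_le V 3 -> {in V, forall v, v ^+ p \in [~: V, V] <*> 'Mho^1(T)} ->
  cyclic (T / [~: V, V]).
Proof.
move=> rkV expM; have pT := pgroupS natural_sub pV.
have sPM : 'Phi(V) \subset [~: V, V] <*> 'Mho^1(T).
  apply: Phi_sub_commg_expg pV _ expM => u v Vu Vv.
  by rewrite (subsetP (joing_subl _ _)) ?mem_commg.
have sMT : [~: V, V] <*> 'Mho^1(T) \subset T by rewrite join_subG natural_der1_sub Mho_sub.
have sMN : [~: V, V] <*> 'Mho^1(T) \subset [~: V, V] <*> 'Phi(T).
  by rewrite genS // setUS // (Phi_joing pT) joing_subr.
have nV'T : [~: V, V] <| T.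
  by rewrite /normal natural_der1_sub (subset_trans natural_sub) ?(der_norm 1 V).
apply: quotient_cyclic_of_index_Phi pr_p pT nV'T _.
apply: leq_trans (natural_index_le_p rkV sPM sMT).
by rewrite dvdn_leq ?indexgS.
Qed.

Lemma natural_expg_der1_Mho (E : {group gT}) (a : {perm gT}) (e : gT) :
  odd p -> T \subset 'Z(V) -> V \subset E -> a \in Aut E ->
  {in V, forall v, a v \in V} -> {in V, forall v, theta (a v) = (- theta v)%R} ->
  p.-elt e -> e \in 'N([~: V, V] <*> 'Mho^1(T)) -> {in T, forall t, a t = t ^ e} ->
  {in V, forall v, v ^+ p \in [~: V, V] <*> 'Mho^1(T)}.
Proof.
move=> odd_p sTZ sVE AutEa aV theta_a pe Ne ae v Vv.
set M := [~: V, V] <*> 'Mho^1(T).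
have pT := pgroupS natural_sub pV.
have cTV : T \subset 'C(V) := subset_trans sTZ (subsetIr V _).
have nMT : T \subset 'N(M).
  exact: normsY (subset_trans natural_sub (der_norm 1 V)) (char_norm (Mho_char 1 T)).
have Vav := aV v Vv.
have Tav : a v * v \in T by rewrite natural_ker ?groupM // thetaM // theta_a // addNr.
have cVc := centP (subsetP cTV _ (natural_commg Vv Vav)).
have Tvp : v ^+ p \in T := natural_expg Vv.
have avp : a v ^+ p = (v ^+ p) ^ e.
  have := morphX (autm AutEa) p (subsetP sVE v Vv).
  by rewrite /= !autmE => <-; rewrite ae.
have Mvp : (v ^+ p) ^ e * v ^+ p \in M.
  have Mz : (a v * v) ^+ p \in M.
    have := Mho_p_elt 1 Tav (mem_p_elt pT Tav).
    by rewrite expn1; apply: (subsetP (joing_subr _ _)).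
  have Mc : [~ v, a v] ^+ 'C(p, 2) \in M.
    by rewrite groupX // (subsetP (joing_subl _ _)) ?mem_commg.
  by rewrite -avp -(groupMr _ Mc) -expMg_Rmul //; apply: commute_sym; apply: cVc.
have Nvp : v ^+ p \in 'N(M) := subsetP nMT _ Tvp.
apply: (coset_idr Nvp); apply: (odd_order_inverted_trivial (e := coset M e)).
- exact: (odd_pgroup_odd (G := <[_]>%G) odd_p (morph_p_elt (coset_morphism M) Ne pe)).
- exact: (odd_pgroup_odd (G := <[_]>%G) odd_p
           (morph_p_elt (coset_morphism M) Nvp (mem_p_elt pT Tvp))).
have := coset_id Mvp; rewrite morphM ?groupJ // morphJ // => inv_vp.
by rewrite (canRL (mulgK _) inv_vp) mul1g.
Qed.

End NaturalModule.

Lemma SL2_neg1 p : exists2 g, g \in SL2 p & GLval g = (-1)%R.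
Proof.
exists (FinRing.unit 'M['F_p]_2 (@unitrN1 _)) => //.
have neg1E : (-1 : 'M['F_p]_2)%R = (-1)%:M%R by rewrite raddfN.
by rewrite inE /= neg1E det_scalar expr2 mulrNN mulr1.
Qed.

Lemma SL2_lift_neg1 (gT : finGroupType) p (A : {set {perm gT}}) (V : {set gT})
    (theta : gT -> 'rV['F_p]_2) :
  (forall g, g \in SL2 p -> exists2 a, a \in A &
     forall x, x \in V -> theta (a x) = mulmx (theta x) (GLval g)) ->
  exists2 a, a \in A & {in V, forall v, theta (a v) = (- theta v)%R}.
Proof.
move=> SL2_lift; have [g SL2g g_neg1] := SL2_neg1 p.
have [a Aa theta_a] := SL2_lift g SL2g.
by exists a => // v Vv; rewrite theta_a // g_neg1 mulmxN mulmx1.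
Qed.

Theorem theorem2p9 (gT : finGroupType) (p : nat) (S : {group gT}) (F : fusion_pred gT)
    (E1 E2 T V : {group gT}) :
  prime p -> odd p -> p.-group S ->
  saturated_fusion_system p S F ->
  F_essential p S F E1 -> F_essential p S F E2 -> E1 != E2 ->
  'N_S(E1) = 'N_S(E2) ->
  is_coreF S F E1 E2 T ->
  (* (1) *)
  rank_le E1 3 -> rank_le E2 3 -> rank_le T 3 ->
  (* (2) *)
  Opp p (OutF F E1) \isog SL2 p ->
  Opp p (OutF F E1) \subset 'C_(AutF F E1)(T | 'P) / InnA E1 ->
  (* (3) *)
  T \subset V -> V \subset E1 ->
  normalized_by (AutF F E1) V ->
  sectional_rank_le V 3 ->
  V \subset 'C_E1(T) * T ->
  natural_SL2_module p (Opp p (AutF F E1)) (InnA E1) V T ->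
  [/\ abelian T, T \subset 'Z(V), #|[~: V, V]| <= p & cyclic (T / [~: V, V])].
Proof.
move=> pr_p odd_p pS [fsF _ _] [sE1S _ _ _] _ _ _ [/and4P[_ nTA _ _] _] _ _ _ _ cOpp.
move=> sTV sVE1 nVA srkV sVCT [theta [thetaM theta_onto theta_ker [_ SL2_lift] _]].
have pE1 : p.-group E1 := pgroupS sE1S pS.
have pV : p.-group V := pgroupS sVE1 pE1.
have rkV : rank_le V 3 := srkV V (subxx V).
have nTE1 : T <| E1 := AutF_normalized_normal fsF sE1S (subset_trans sTV sVE1) nTA.
have nVE1 : V <| E1 := AutF_normalized_normal fsF sE1S sVE1 nVA.
have sTZ : T \subset 'Z(V).
  apply: natural_sub_center pr_p pV thetaM theta_onto theta_ker rkV _.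
  exact: subset_trans sVCT (mulSg _ (subsetIr _ _)).
have sAAut : AutF F E1 \subset Aut E1 by rewrite /AutF setIdE subsetIl.
have [a Oa theta_a] := SL2_lift_neg1 SL2_lift.
have aV : {in V, forall v, a v \in V}.
  by move=> v Vv; have /astabsP/(_ v) := subsetP (Opp_subG p nVA) a Oa; rewrite /= Vv.
have [e E1e ae] :=
  Opp_acts_as_inner sAAut (subset_trans sTV sVE1) (normal_norm nTE1) cOpp Oa.
have nME1 : E1 \subset 'N([~: V, V] <*> 'Mho^1(T)).
  apply: normsY; apply: normal_norm.
    exact: char_normal_trans (der_char 1 V) nVE1.
  exact: char_normal_trans (Mho_char 1 T) nTE1.
have expM := natural_expg_der1_Mho pr_p pV thetaM theta_ker odd_p sTZ sVE1
  (subsetP (Opp_subG p sAAut) a Oa) aV theta_a (mem_p_elt pE1 E1e) (subsetP nME1 e E1e) ae.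
split=> //.
- exact: abelianS sTZ (center_abelian V).
- exact: natural_card_der1 pr_p thetaM theta_onto theta_ker sTZ.
- exact: natural_quotient_der1_cyclic pr_p pV thetaM theta_onto theta_ker rkV expM.
Qed.
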